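(* There are constants $k$ and $C$ such that the following holds. Let $p>2$ be prime, $\Gamma_0$ a $3$-regular connected graph, $\Gamma_1 = \mathrm{CFI}(\Gamma_0)$, $\Gamma_2 = \widetilde{\mathrm{CFI}(\Gamma_0)}$, and for $i\in\{1,2\}$ let $G_i = G_{\Gamma_i}$ be the group from Mekler's construction, $n=|G_i|$. Let $u, v \in G_{i}$ with $|\mathrm{supp}(u)| = 1$ and $|\mathrm{supp}(v)| > 1$. In the count-free Version I pebble game on $(G_i, G_i)$, from a position in which $u \mapsto v$ has been pebbled, Spoiler can win using at most $k$ additional pebble pairs within $C\log \log n + C$ additional rounds.
   Context: CFI construction: for a connected graph $\Gamma_0$, each vertex $v$ of degree $d$ is replaced by a gadget with external vertices $a_1^v,b_1^v,\ldots,a_d^v,b_d^v$ (pair $i$ associated to the $i$-th edge at $v$) and internal vertices indexed by strings in $\{0,1\}^d$ with an even number of $1$'s, the internal vertex with string $s$ adjacent to $a_i^v$ if $s_i=0$ and to $b_i^v$ otherwise; for each edge $xy$ of $\Gamma_0$ with associated pairs $(a_i^x,b_i^x),(a_j^y,b_j^y)$ add edges $a_i^xa_j^y$, $b_i^xb_j^y$ to get $\mathrm{CFI}(\Gamma_0)$; $\widetilde{\mathrm{CFI}(\Gamma_0)}$ instead uses $a_i^xb_j^y$, $b_i^xa_j^y$ for one edge of $\Gamma_0$. Mekler's construction: for a simple graph $\Gamma$ on $v_1,\ldots,v_m$, $G_\Gamma = \langle x_1,\ldots,x_m \mid x_i^p=1, [[x_i,x_j],x_k]=1, [x_i,x_j]=1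 \text{ if } v_iv_j\in E(\Gamma)\rangle$; every element is $x_1^{d_1}\cdots x_m^{d_m}c$ with $c$ in the commutator subgroup and the $d_i$ unique mod $p$; $\mathrm{supp}(x)=\{v_i: d_i\not\equiv 0 \pmod p\}$. Count-free Version I pebble game on groups $G,H$: each round Spoiler picks up a pebble pair, the winning condition is checked, Spoiler places one pebble of the pair on an element of either group and Duplicator places the partner on an element of the other group; Spoiler wins when the map $g_i\mapsto h_i$ between pebbled elements fails to satisfy, for all $i,j,t$: $g_i=g_j\iff h_i=h_j$ and $g_ig_j=g_t\iff h_ih_j=h_t$. *)

From mathcomp Require Import all_boot all_order all_algebra.
Set Implicit Arguments. Unset Strict Implicit. Unset Printing Implicit Defensive.
Import GRing.Theory.
Local Open Scope ring_scope.

Definition simple_graph (V : finType) (e : rel V) : Prop :=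
  symmetric e /\ irreflexive e.
Definition cubic (V : finType) (e : rel V) : Prop :=
  forall v : V, #|[set w | e v w]| = 3%N.
Definition connected_graph (V : finType) (e : rel V) : Prop :=
  forall x y : V, connect e x y.

(* Instead of numbering the edges at v by 1..d, the
   i-th external pair at v is indexed by the neighbour w at the other end of
   the i-th edge:  a^v_w = inl (v,w,false),  b^v_w = inl (v,w,true).
   An internal vertex with string s in {0,1}^d (even number of 1's) is
   recorded as inr (v,S) with S = {w in N(v) | s_w = 1}, |S| even.       *)
Definition cfi_raw (V0 : finType) :=
  ((V0 * V0 * bool) + (V0 * {set V0}))%type.

Definition cfi_valid (V0 : finType) (e0 : rel V0) (z : cfi_raw V0) : bool :=
  match z with
  | inl (v, w, _) => e0 v w
  | inr (v, A) => (A \subset [set w | e0 v w]) && ~~ odd #|A|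
  end.

Definition cfi_vertex (V0 : finType) (e0 : rel V0) :=
  {z : cfi_raw V0 | cfi_valid e0 z}.

(* tw x y = true iff xy is the edge whose connections are twisted *)
Definition cfi_raw_rel (V0 : finType) (e0 : rel V0) (tw : V0 -> V0 -> bool)
  (z1 z2 : cfi_raw V0) : bool :=
  match z1, z2 with
  | inr (v, A), inl (x, w, b) => (v == x) && (b == (w \in A))
  | inl (x, w, b), inr (v, A) => (v == x) && (b == (w \in A))
  | inl (x, y, b), inl (y', x', b') =>
      [&& x == x', y == y', e0 x y & b' == b (+) tw x y]
  | inr _, inr _ => false
  end.

Definition cfi_rel (V0 : finType) (e0 : rel V0) (tw : V0 -> V0 -> bool) :
  rel (cfi_vertex e0) := fun z1 z2 => cfi_raw_rel e0 tw (val z1) (val z2).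

Definition no_twist (V0 : finType) : V0 -> V0 -> bool := fun _ _ => false.
(* the twisted version: edge x0y0 uses a_x0 b_y0, b_x0 a_y0 *)
Definition twist_at (V0 : finType) (x0 y0 : V0) : V0 -> V0 -> bool :=
  fun x y => ((x == x0) && (y == y0)) || ((x == y0) && (y == x0)).

(* Mekler's group G_Gamma, p an odd prime, given in its normal form
   x_1^{d_1} ... x_m^{d_m} c.  Vertices are ordered by enum_rank.  The
   commutator subgroup is elementary abelian with basis the [x_b, x_a] for
   a < b non-adjacent; these index pairs form the type [mek_nonedge e].
   An element is a pair (d, c) with d : V -> Z_p and c the exponents of
   the basic commutators.  Multiplication:
     x^d c * x^d' c' = x^(d+d') c c' prod_{a<b} [x_b,x_a]^(d_b d'_a).     *)
Definition nonedge (V : finType) (e : rel V) (ab : V * V) : bool :=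
  (enum_rank ab.1 < enum_rank ab.2)%N && ~~ e ab.1 ab.2.

Definition mek_nonedge (V : finType) (e : rel V) := {ab : V * V | nonedge e ab}.

Definition mekler (p : nat) (V : finType) (e : rel V) :=
  ({ffun V -> 'Z_p} * {ffun mek_nonedge e -> 'Z_p})%type.

Definition mekler_mul (p : nat) (V : finType) (e : rel V)
  (g h : mekler p e) : mekler p e :=
  ([ffun a => g.1 a + h.1 a],
   [ffun k : mek_nonedge e => g.2 k + h.2 k + g.1 (val k).2 * h.1 (val k).1]).

Definition supp (p : nat) (V : finType) (e : rel V) (g : mekler p e) : {set V} :=
  [set a | g.1 a != 0].

(* Count-free Version I pebble game on (G,H), with one pebble pair fixed on
   (u,v) and k additional pebble pairs, indexed by 'I_k.  A position for
   the additional pairs records, for each pair, None (off the board) or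
   Some (g,h).                                                          *)
Definition pebbled (G H : eqType) (k : nat) (fixed : G * H)
  (pos : 'I_k -> option (G * H)) : seq (G * H) :=
  fixed :: pmap pos (enum 'I_k).

Definition pebble_iso (G H : eqType) (mulG : G -> G -> G) (mulH : H -> H -> H)
  (L : seq (G * H)) : Prop :=
  forall a b c, a \in L -> b \in L -> c \in L ->
    ((a.1 == b.1) = (a.2 == b.2)) /\
    ((mulG a.1 b.1 == c.1) = (mulH a.2 b.2 == c.2)).

Definition upd (k : nat) (X : Type) (f : 'I_k -> X) (i : 'I_k) (x : X) :
  'I_k -> X := fun j => if j == i then x else f j.

(* In each
   round Spoiler picks up a pair i, the winning condition is checked on the
   remaining pebbled pairs, then Spoiler places pebble i on some element of
   either group and Duplicator answers in the other group.              *)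
Fixpoint spoiler_wins (G H : eqType) (mulG : G -> G -> G) (mulH : H -> H -> H)
  (k : nat) (fixed : G * H) (r : nat) (pos : 'I_k -> option (G * H)) : Prop :=
  match r with
  | 0 => False
  | r'.+1 =>
      exists i : 'I_k,
        let pos' := upd pos i None in
        ~ pebble_iso mulG mulH (pebbled fixed pos') \/
        (exists x : G, forall y : H,
            spoiler_wins mulG mulH fixed r' (upd pos' i (Some (x, y)))) \/
        (exists y : H, forall x : G,
            spoiler_wins mulG mulH fixed r' (upd pos' i (Some (x, y))))
  end.

Definition empty_pos (k : nat) (X : Type) : 'I_k -> option X := fun _ => None.

From mathcomp Require Import all_boot all_order all_algebra.
Set Implicit Arguments. Unset Strict Implicit. Unset Printing Implicit Defensive.
Import GRing.Theory.

(* In Mekler's group two elements g, h commute iff g_b h_a = h_b g_a for all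
   distinct non-adjacent vertices a, b.  A CFI graph over a cubic graph has no
   4-cycle (an even subset of a 3-set is determined by two of its points), and
   in a graph without 4-cycles the centraliser of an element whose support has
   at least two vertices is abelian.  If supp u = {a}, the generators x_b1,
   x_b2 of two non-adjacent neighbours b1, b2 of a centralise u but do not
   commute.  Spoiler exposes this in six rounds. *)

Section PebbleGame.
Variables (G H : eqType) (mulG : G -> G -> G) (mulH : H -> H -> H).

Lemma mem_pebbled (k : nat) (fixed : G * H) (pos : 'I_k -> option (G * H)) i q :
  pos i = Some q -> q \in pebbled fixed pos.
Proof.
move=> pos_i; rewrite inE mem_pmap; apply/orP; right.
by apply/mapP; exists i; rewrite ?mem_enum ?pos_i.
Qed.

Lemma pebble_iso_mul (L : seq (G * H)) a b c :
  pebble_iso mulG mulH L -> a \in L -> b \in L -> c \in L ->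
  (mulG a.1 b.1 == c.1) = (mulH a.2 b.2 == c.2).
Proof. by move=> iso aL bL cL; case: (iso a b c aL bL cL). Qed.

Lemma spoiler_wins_le (k : nat) (fixed : G * H) r r'
    (pos : 'I_k -> option (G * H)) :
  (r <= r')%N -> spoiler_wins mulG mulH fixed r pos ->
  spoiler_wins mulG mulH fixed r' pos.
Proof.
elim: r r' pos => [|r IH] [|r'] pos //= le_rr' [i [lost|[[x wins]|[y wins]]]].
- by exists i; left.
- by exists i; right; left; exists x => y; apply: IH (wins y).
- by exists i; right; right; exists y => x; apply: IH (wins x).
Qed.

(* Spoiler pebbles h1, h2, h1 u, h2 u and h1 h2, then picks up the unused
   sixth pebble to trigger the check: the pebbles on h_i u force Duplicator's
   answers y_i to commute with v, hence with each other. *)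
Lemma spoiler_wins_centraliser (u : G) (v : H) (h1 h2 : G) :
  mulG h1 u = mulG u h1 -> mulG h2 u = mulG u h2 -> mulG h1 h2 != mulG h2 h1 ->
  (forall y1 y2, mulH y1 v = mulH v y1 -> mulH y2 v = mulH v y2 ->
     mulH y1 y2 = mulH y2 y1) ->
  spoiler_wins mulG mulH (u, v) 6 (@empty_pos 6 (G * H)).
Proof.
move=> h1u h2u h1h2 v_centraliser_comm.
exists (@Ordinal 6 0 isT); right; left; exists h1 => y1.
exists (@Ordinal 6 1 isT); right; left; exists h2 => y2.
exists (@Ordinal 6 2 isT); right; left; exists (mulG h1 u) => z1.
exists (@Ordinal 6 3 isT); right; left; exists (mulG h2 u) => z2.
exists (@Ordinal 6 4 isT); right; left; exists (mulG h1 h2) => z3.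
exists (@Ordinal 6 5 isT); left => iso.
set pos := upd _ _ _ in iso.
have on_board i q : pos i = Some q -> q \in pebbled (u, v) pos := @mem_pebbled _ _ pos i q.
have uv : (u, v) \in pebbled (u, v) pos by rewrite inE eqxx.
have h1y1 := on_board (@Ordinal 6 0 isT) (h1, y1) erefl.
have h2y2 := on_board (@Ordinal 6 1 isT) (h2, y2) erefl.
have h1u_z1 := on_board (@Ordinal 6 2 isT) (mulG h1 u, z1) erefl.
have h2u_z2 := on_board (@Ordinal 6 3 isT) (mulG h2 u, z2) erefl.
have h1h2_z3 := on_board (@Ordinal 6 4 isT) (mulG h1 h2, z3) erefl.
have commute_v h y z : (h, y) \in pebbled (u, v) pos ->
    (mulG h u, z) \in pebbled (u, v) pos -> mulG h u = mulG u h ->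
    mulH y v = mulH v y.
  move=> hy hu_z hu; have /eqP -> : mulH y v == z.
    by rewrite -(pebble_iso_mul iso hy uv hu_z) /=.
  by apply/esym/eqP; rewrite -(pebble_iso_mul iso uv hy hu_z) /= hu.
have y1y2 : mulH y1 y2 = z3.
  by apply/eqP; rewrite -(pebble_iso_mul iso h1y1 h2y2 h1h2_z3) /=.
have : mulH y2 y1 != z3.
  by rewrite -(pebble_iso_mul iso h2y2 h1y1 h1h2_z3) /= eq_sym.
rewrite -y1y2 (v_centraliser_comm y1 y2) ?eqxx //.
- exact: commute_v h1u_z1 h1u.
- exact: commute_v h2u_z2 h2u.
Qed.

End PebbleGame.

Lemma unitZp_prime (p : nat) (x : 'Z_p) :
  prime p -> (x \is a GRing.unit) = (x != 0%R).
Proof.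
move=> p_pr; have p_gt1 := prime_gt1 p_pr.
apply/idP/idP => [|x_neq0]; first by apply: contraTneq => ->; rewrite unitr0.
rewrite -[x]natr_Zp unitZpE // prime_coprime // gtnNdvd //.
  by rewrite lt0n.
by rewrite -[p in (_ < p)%N](Zp_cast p_gt1) ltn_ord.
Qed.

Definition c4_free (T : eqType) (e : rel T) :=
  forall s t c d, s != t -> e s c -> e t c -> e s d -> e t d -> c = d.

Lemma c4_free_indep_matching (T : eqType) (e : rel T) (I : pred T) :
  symmetric e ->
  (forall x y, I x -> I y -> ~~ e x y) ->
  (forall x c d, ~~ I x -> ~~ I c -> ~~ I d -> e x c -> e x d -> c = d) ->
  (forall s t c d, I s -> I t -> c != d -> e s c -> e t c -> e s d -> e t d -> s = t) ->
  c4_free e.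
Proof.
move=> e_sym indep matching I_common s t c d st sc tc sd td.
have nbI_out x y : I x -> e x y -> ~~ I y by move=> Ix; apply: contraTN; apply: indep.
have [Is|Is] := boolP (I s); have [It|It] := boolP (I t).
- have [//|cd] := eqVneq c d.
  by rewrite (I_common s t c d Is It cd sc tc sd td) eqxx in st.
- by apply: (matching t) => //; apply: nbI_out Is _.
- by apply: (matching s) => //; apply: nbI_out It _.
have [Ic|Ic] := boolP (I c); last first.
  by case/eqP: st; apply: (matching c) => //; rewrite e_sym.
have [Id|Id] := boolP (I d); last first.
  by case/eqP: st; apply: (matching d) => //; rewrite e_sym.
by apply: (I_common c d s t Ic Id st); rewrite e_sym.
Qed.

Section Mekler.
Local Open Scope ring_scope.
Variables (p : nat) (V : finType) (e : rel V).
Hypothesis e_sym : symmetric e.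

Lemma mekler_commP (g h : mekler p e) :
  mekler_mul g h = mekler_mul h g <->
  (forall a b, a != b -> ~~ e a b -> g.1 b * h.1 a = h.1 b * g.1 a).
Proof.
split => [gh|coord_comm]; last first.
  congr (_, _); apply/ffunP => k; rewrite !ffunE; first by rewrite addrC.
  case: k => [[a b] /= ab_nonedge]; have /andP [lt_ab nab] := ab_nonedge.
  rewrite [h.2 _ + _]addrC coord_comm //.
  by apply: contraTneq lt_ab => ->; rewrite ltnn.
move=> a b; wlog lt_ab : a b / (enum_rank a < enum_rank b)%N => [hyp ab nab|ab nab].
  have [lt|] := ltnP (enum_rank a) (enum_rank b); first exact: hyp.
  rewrite leq_eqVlt => /orP [/eqP/val_inj/enum_rank_inj ba|lt]; first by rewrite ba eqxx in ab.
  by rewrite mulrC [RHS]mulrC; apply/esym/hyp; rewrite 1?eq_sym 1?e_sym.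
have ab_nonedge : nonedge e (a, b) by rewrite /nonedge lt_ab.
move/(congr1 snd)/ffunP/(_ (exist _ (a, b) ab_nonedge)): gh; rewrite !ffunE /=.
by rewrite [h.2 _ + _]addrC => /addrI.
Qed.

Hypothesis p_pr : prime p.

Lemma mekler_centraliser_coord0 (v y : mekler p e) a c :
  mekler_mul y v = mekler_mul v y -> v.1 a != 0 -> v.1 c = 0 -> ~~ e a c ->
  y.1 c = 0.
Proof.
move=> /mekler_commP yv va vc nac.
have ac : a != c by apply: contraNneq va => ->; rewrite vc.
have := yv _ _ ac nac; rewrite vc mul0r => /eqP.
by rewrite mulIr_eq0 => [/eqP|]; last by apply/mulIr; rewrite unitZp_prime.
Qed.

Lemma mekler_centraliser_comm (v y y' : mekler p e) :
  c4_free e -> (1 < #|supp v|)%N ->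
  mekler_mul y v = mekler_mul v y -> mekler_mul y' v = mekler_mul v y' ->
  mekler_mul y y' = mekler_mul y' y.
Proof.
move=> c4 /card_gt1P [a1 [a2 [va1 va2 a12]]] yv y'v; rewrite !inE in va1 va2.
have vanish z a : v.1 a != 0 -> v.1 z = 0 -> ~~ e a z -> y.1 z = 0 /\ y'.1 z = 0.
  by move=> va vz naz; split; apply: mekler_centraliser_coord0 va vz naz.
apply/mekler_commP => c d cd ncd.
have [vc|vc] := eqVneq (v.1 c) 0; have [vd|vd] := eqVneq (v.1 d) 0.
- have : ~~ [&& e a1 c, e a2 c, e a1 d & e a2 d].
    by apply: contra cd => /and4P [a1c a2c a1d a2d]; rewrite (c4 _ _ _ _ a12 a1c a2c a1d a2d).
  rewrite !negb_and => /or4P [] na.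
  + by have [-> ->] := vanish c a1 va1 vc na; rewrite !mulr0.
  + by have [-> ->] := vanish c a2 va2 vc na; rewrite !mulr0.
  + by have [-> ->] := vanish d a1 va1 vd na; rewrite !mul0r.
  + by have [-> ->] := vanish d a2 va2 vd na; rewrite !mul0r.
- by rewrite e_sym in ncd; have [-> ->] := vanish c d vd vc ncd; rewrite !mulr0.
- by have [-> ->] := vanish d c vc vd ncd; rewrite !mul0r.
have /mekler_commP/(_ c d cd ncd) yv_cd := yv.
have /mekler_commP/(_ c d cd ncd) y'v_cd := y'v.
apply: (mulIr (_ : v.1 d \is a GRing.unit)); first by rewrite unitZp_prime.
by rewrite -!mulrA ![_ * v.1 d]mulrC -yv_cd -y'v_cd mulrCA.
Qed.

Definition mekler_gen (b : V) : mekler p e := ([ffun a => (a == b)%:R], 0).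

Lemma mekler_gen_comm (u : mekler p e) b :
  supp u \subset [set a | e a b] ->
  mekler_mul (mekler_gen b) u = mekler_mul u (mekler_gen b).
Proof.
move=> supp_u; apply/mekler_commP => c d cd ncd; rewrite !ffunE.
have u0 a : ~~ e a b -> u.1 a = 0.
  move=> nab; apply/eqP; apply: contraNT nab => ua.
  by move/subsetP/(_ a): supp_u; rewrite !inE; apply.
have -> : (d == b)%:R * u.1 c = 0.
  by have [db|_] := eqVneq d b; [rewrite u0 ?mulr0 // -db | rewrite mul0r].
have [cb|_] := eqVneq c b; last by rewrite mulr0.
by rewrite u0 ?mul0r // e_sym -cb.
Qed.

Lemma mekler_gen_noncomm b b' : b != b' -> ~~ e b b' ->
  mekler_mul (mekler_gen b) (mekler_gen b') != mekler_mul (mekler_gen b') (mekler_gen b).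
Proof.
move=> bb' nbb'; apply/negP => /eqP /mekler_commP /(_ b b' bb' nbb').
by rewrite !ffunE !eqxx eq_sym (negbTE bb') mul0r mulr1 => /esym/eqP; rewrite oner_eq0.
Qed.

End Mekler.

Lemma even_subsets_eq (T : finType) (N A B : {set T}) x :
  A \subset N -> B \subset N -> ~~ odd #|A| -> ~~ odd #|B| ->
  {in N :\ x, A =i B} -> A = B.
Proof.
move=> AN BN evenA evenB AB.
have ABx : A :\ x = B :\ x.
  apply/setP => z; rewrite !inE; have [//|zx /=] := eqVneq z x.
  have [zN|zN] := boolP (z \in N); first by apply: AB; rewrite !inE zx.
  by rewrite (contraNF (subsetP AN z)) // (contraNF (subsetP BN z)).
apply/setP => y; have [->|yx] := eqVneq y x; last first.
  by move/setP/(_ y): ABx; rewrite !inE yx.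
have mem_x (C : {set T}) : ~~ odd #|C| -> (x \in C) = odd #|C :\ x|.
  by rewrite (cardsD1 x C) oddD; case: (x \in C); case: (odd #|C :\ x|).
by rewrite mem_x // mem_x // ABx.
Qed.

Lemma even_subsets3_eq (T : finType) (N A B : {set T}) w1 w2 :
  #|N| = 3 -> A \subset N -> B \subset N -> ~~ odd #|A| -> ~~ odd #|B| ->
  w1 \in N -> w2 \in N -> w1 != w2 ->
  (w1 \in A) = (w1 \in B) -> (w2 \in A) = (w2 \in B) -> A = B.
Proof.
move=> N3 AN BN evenA evenB Nw1 Nw2 w12 AB1 AB2.
have [x Nx] : exists x, N :\: [set w1; w2] = [set x].
  apply/cards1P; rewrite cardsD (setIidPr _) ?cards2 ?w12 ?N3 //.
  by apply/subsetP => y; rewrite !inE => /orP [] /eqP ->.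
apply: (even_subsets_eq (x := x) AN BN evenA evenB) => y; rewrite !inE => /andP [yx yN].
have : y \in [set w1; w2] by apply: contraNT yx => yw; rewrite -in_set1 -Nx inE yw yN.
by rewrite !inE => /orP [] /eqP ->.
Qed.

Lemma twist_at_sym (V0 : finType) (x0 y0 : V0) x y :
  twist_at x0 y0 x y = twist_at x0 y0 y x.
Proof. by rewrite /twist_at orbC andbC [(y == y0) && _]andbC. Qed.

Section CFI.
Variables (V0 : finType) (e0 : rel V0) (tw : V0 -> V0 -> bool).
Hypotheses (e0_sym : symmetric e0) (tw_sym : forall x y, tw x y = tw y x).
Local Notation cfi := (@cfi_rel _ e0 tw).

Definition cfi_internal (z : cfi_vertex e0) : bool :=
  if val z is inr _ then true else false.

Lemma cfi_rel_sym : symmetric cfi.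
Proof.
move=> [[[[x y] b]|[v A]] ?] [[[[x' y'] b']|[v' A']] ?] //=.
rewrite /cfi_rel /=; apply/and4P/and4P => -[/eqP <- /eqP <- exy /eqP ->];
  by rewrite !eqxx e0_sym exy tw_sym -addbA addbb addbF.
Qed.

Lemma cfi_internal_indep x y : cfi_internal x -> cfi_internal y -> ~~ cfi x y.
Proof. by case: x y => [[[[? ?] ?]|[? ?]] ?] [[[[? ?] ?]|[? ?]] ?]. Qed.

Lemma cfi_external_matching x c d :
  ~~ cfi_internal x -> ~~ cfi_internal c -> ~~ cfi_internal d ->
  cfi x c -> cfi x d -> c = d.
Proof.
case: x c d => [[[[x y] b]|[? ?]] ?] [[[[y1 x1] b1]|[? ?]] ?]
  [[[[y2 x2] b2]|[? ?]] ?] //= _ _ _ xc xd.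
apply: val_inj; move: xc xd; rewrite /cfi_rel /=.
by move=> /and4P [/eqP <- /eqP <- _ /eqP ->] /and4P [/eqP <- /eqP <- _ /eqP ->].
Qed.

Hypothesis e0_cubic : cubic e0.

Lemma cfi_internal_common_nb s t c d :
  cfi_internal s -> cfi_internal t -> c != d ->
  cfi s c -> cfi t c -> cfi s d -> cfi t d -> s = t.
Proof.
case: s t c d => [[[[? ?] ?]|[v A]] vA] [[[[? ?] ?]|[v' A']] vA']
  [[[[x1 w1] b1]|[? ?]] vw1] [[[[x2 w2] b2]|[? ?]] vw2] //= _ _.
rewrite -val_eqE /cfi_rel /= => cd /andP [/eqP vx1 /eqP b1A] /andP [/eqP v'x1 /eqP b1A'].
move=> /andP [/eqP vx2 /eqP b2A] /andP [_ /eqP b2A']; apply: val_inj => /=.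
subst x1 x2 v' b1 b2.
have w12 : w1 != w2 by apply: contraNneq cd => ->.
move: vA vA' => /= /andP [AN evenA] /andP [A'N evenA'].
congr (inr (_, _)); apply: (even_subsets3_eq (e0_cubic v) AN A'N evenA evenA' _ _ w12);
  by rewrite ?inE.
Qed.

Lemma cfi_c4_free : c4_free cfi.
Proof.
exact: c4_free_indep_matching cfi_rel_sym cfi_internal_indep cfi_external_matching
  cfi_internal_common_nb.
Qed.

Lemma cfi_nonadjacent_nbs (z : cfi_vertex e0) :
  irreflexive e0 -> (forall v, 1 < #|[set w | e0 v w]|)%N ->
  exists b1 b2, [/\ b1 != b2, cfi z b1, cfi z b2 & ~~ cfi b1 b2].
Proof.
move=> e0_irr deg; case: z => [[[[v w] b]|[v A]] /= z_ok].
  have [w' vw' w'w] : exists2 w', e0 v w' & w' != w.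
    have /card_gt1P [w1 [w2 [+ + w12]]] := deg v; rewrite !inE => vw1 vw2.
    by have [w1w|w1w] := eqVneq w1 w; [exists w2; rewrite // -w1w eq_sym | exists w1].
  have wA : (w \in if b then [set w; w'] else set0) = b by case: b; rewrite !inE ?eqxx.
  have A_ok : cfi_valid e0 (inr (v, if b then [set w; w'] else set0)).
    case: b {wA} => /=; last by rewrite sub0set cards0.
    rewrite cards2 eq_sym w'w andbT; apply/subsetP => y.
    by rewrite !inE => /orP [] /eqP ->.
  have wv_ok : cfi_valid e0 (inl (w, v, b (+) tw v w)) by rewrite /= e0_sym.
  exists (exist _ (inl (w, v, b (+) tw v w)) wv_ok), (exist _ (inr (v, _)) A_ok).
  rewrite /cfi_rel /= !eqxx /=.
  have vw : v != w by apply: contraTneq z_ok => <-; rewrite e0_irr.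
  by split; rewrite ?z_ok ?(negbTE vw) //; apply/eqP/esym/wA.
have /card_gt1P [w1 [w2 [+ + w12]]] := deg v; rewrite !inE => vw1 vw2.
exists (exist _ (inl (v, w1, w1 \in A)) vw1), (exist _ (inl (v, w2, w2 \in A)) vw2).
rewrite /cfi_rel /= !eqxx; split=> //.
- by rewrite -val_eqE /=; apply: contra w12 => /eqP [->].
- by apply/negP => /and4P [/eqP vw2' /eqP w1v _ _]; rewrite -vw2' -w1v eqxx in w12.
Qed.

End CFI.

Theorem lemma4p19 :
  exists k C : nat,
  forall (p : nat), prime p -> (2 < p)%N ->
  forall (V0 : finType) (e0 : rel V0),
    simple_graph e0 -> cubic e0 -> connected_graph e0 ->
  forall (x0 y0 : V0), e0 x0 y0 ->
  forall (twisted : bool),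
    let tw := if twisted then twist_at x0 y0 else @no_twist V0 in
    let G := mekler p (@cfi_rel V0 e0 tw) in
    let n := #|{: G}| in
  forall u v : G,
    #|supp u| = 1%N -> (1 < #|supp v|)%N ->
    spoiler_wins (@mekler_mul p _ (@cfi_rel V0 e0 tw)) (@mekler_mul p _ (@cfi_rel V0 e0 tw))
      (u, v) (C * trunc_log 2 (trunc_log 2 n) + C) (@empty_pos k (G * G)).
Proof.
exists 6, 6 => p p_pr _ V0 e0 [e0_sym e0_irr] e0_cubic _ x0 y0 _ twisted tw G n u v.
move=> /eqP/cards1P [a supp_u] supp_v.
have tw_sym x y : tw x y = tw y x by rewrite /tw; case: (twisted) => //; apply: twist_at_sym.
have E_sym := cfi_rel_sym e0_sym tw_sym.
have deg_gt1 w : (1 < #|[set w' | e0 w w']|)%N by rewrite e0_cubic.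
have [b1 [b2 [b12 ab1 ab2 nb12]]] := cfi_nonadjacent_nbs tw e0_sym a e0_irr deg_gt1.
apply: spoiler_wins_le (leq_addl _ _)
  (spoiler_wins_centraliser (h1 := mekler_gen p _ b1) (h2 := mekler_gen p _ b2) _ _ _ _).
- by apply: mekler_gen_comm; rewrite // supp_u sub1set inE.
- by apply: mekler_gen_comm; rewrite // supp_u sub1set inE.
- exact: mekler_gen_noncomm.
- by move=> y1 y2; apply: mekler_centraliser_comm => //; exact: cfi_c4_free.
Qed.
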